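(* Let $H$ be a $2$-transitive affine permutation group of degree $2^6$ on a set $\Omega$, and let $1\ne K\unlhd H$. Assume that $K_\alpha\ne 1$ for $\alpha\in\Omega$, and $K$ is imprimitive on $\Omega$. Then (1) $K_\alpha\cong\mathbb{Z}_s$ with $s\in\{3,7\}$, and there is $x\in H_\alpha$ such that $K_\alpha\langle x\rangle\cong\mathbb{Z}_{21}$; and (2) for each $x\in H_\alpha$ with $K_\alpha\langle x\rangle\cong\mathbb{Z}_{21}$, the subgroup $K\langle x\rangle$ is primitive on $\Omega$.
   Context: An affine permutation group of degree $2^6$ is a permutation group on a set of size $2^6$ having a regular normal subgroup isomorphic to $\mathbb{Z}_2^6$. $H_\alpha$, $K_\alpha$ denote point stabilizers. *)

From mathcomp Require Import all_boot all_algebra all_fingroup all_solvable.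
Set Implicit Arguments. Unset Strict Implicit. Unset Printing Implicit Defensive.
Local Open Scope group_scope.

Definition regular_on (Omega : finType) (N : {set {perm Omega}}) : bool :=
  [transitive N, on [set: Omega] | 'P] && [forall a, 'C_N[a | 'P] == 1].

Definition affine_2_6 (Omega : finType) (G : {group {perm Omega}}) : Prop :=
  #|Omega| = (2 ^ 6)%N /\
  exists N : {group {perm Omega}},
    [/\ N <| G, regular_on N & N \isog [set: 'rV['F_2]_6]].

Definition imprimitive_on (Omega : finType) (K : {set {perm Omega}}) : bool :=
  [transitive K, on [set: Omega] | 'P] &&
  [exists Q, imprimitivity_system K [set: Omega] 'P Q].

(* Let N be the regular normal subgroup, elementary abelian of order 64, and
   L = K_a.  By 2-transitivity H_a permutes N^# transitively by conjugation and
   normalises L, so N <= K and all L-classes in N^# have one size d > 1, with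
   64 = 1 mod d.  Blocks of a group G >= N correspond to the G_a-invariant
   subgroups of N, so imprimitivity of K gives a proper nontrivial L-invariant
   W < N with |W| = 1 mod d; this forces d = 3, or d = 7 and |W| = 8.  In both
   cases every L-class together with 1 is a subgroup, which makes L semiregular
   on N^#, hence |L| = d.  For the other prime e of 21, the e-part of
   |H_a| >= 63 does not divide |Aut L| = d - 1, so a Sylow e-subgroup of H_a
   centralises an element of order e.  Conversely, if L<x> is cyclic of order
   21, its element y of order e has |C_N(y)| = 1 mod 3 and mod 7, hence
   C_N(y) = 1, and then every L<y>-invariant subgroup of N has order 1 mod 21:
   it is 1 or N, so K<x> is primitive. *)

From mathcomp Require Import all_boot all_algebra all_fingroup all_solvable.
From mathcomp Require Import mxabelem.
Import GRing.Theory.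
Set Implicit Arguments. Unset Strict Implicit. Unset Printing Implicit Defensive.

Lemma proper_divisor64 w : w %| 64 -> w < 64 -> w \in [:: 1; 2; 4; 8; 16; 32].
Proof.
rewrite dvdn_divisors // -[divisors 64]/[:: 1; 2; 4; 8; 16; 32; 64].
by rewrite !inE => /or4P[||| /or4P[|||]] /eqP->.
Qed.

Lemma divisor64_mod21 c : c %| 64 -> c < 64 -> c = 1 %[mod 21] -> c = 1.
Proof.
by move=> c64 /(proper_divisor64 c64); rewrite !inE => /or4P[||| /or3P[||]] /eqP->.
Qed.

Lemma divisor64_mod_cases d w : 1 < d -> 64 = 1 %[mod d] -> w %| 64 -> 1 < w < 64 ->
  w = 1 %[mod d] -> d = 3 \/ d = 7 /\ w = 8.
Proof.
move=> d_gt1 /eqP d63 w64 /andP[w_gt1 w_lt64] /eqP dw.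
move: d63 dw; rewrite !eqn_mod_dvd ?(ltnW w_gt1) //= => d63 dw.
have dP p : d %| p -> prime p -> d = p.
  by move=> dp p_pr; apply: (prime_nt_dvdP p_pr) dp; rewrite neq_ltn d_gt1 orbT.
have : d %| gcdn 63 (w - 1) by rewrite dvdn_gcd d63.
move: w_gt1 (proper_divisor64 w64 w_lt64).
rewrite !inE => + /or4P[||| /or3P[||]] /eqP wE; rewrite wE //= => _.
- by rewrite -[gcdn _ _]/1 dvdn1 => /eqP d1; rewrite d1 in d_gt1.
- by rewrite -[gcdn _ _]/3 => /dP/(_ isT); left.
- by rewrite -[gcdn _ _]/7 => /dP/(_ isT); right.
- by rewrite -[gcdn _ _]/3 => /dP/(_ isT); left.
- by rewrite -[gcdn _ _]/1 dvdn1 => /eqP d1; rewrite d1 in d_gt1.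
Qed.

Local Open Scope group_scope.

Section RegularNormalSubgroup.

Variables (Omega : finType) (N : {group {perm Omega}}).
Hypothesis regN : regular_on N.

Lemma regular_transitive : [transitive N, on [set: Omega] | 'P].
Proof. by case/andP: regN. Qed.

Lemma regular_astab1 a : 'C_N[a | 'P] = 1.
Proof. by case/andP: regN => _ /forallP/(_ a)/eqP. Qed.

Lemma regular_orbit_inj a : {in N &, injective (fun n : {perm Omega} => n a)}.
Proof.
move=> n m Nn Nm nm; apply/eqP; rewrite eq_mulgV1; apply/eqP/set1gP.
rewrite -(regular_astab1 a) inE groupM ?groupV //=.
by apply/astab1P; rewrite /= apermE permM nm permK.
Qed.

Lemma regular_orbit_surj a b : exists2 n, n \in N & b = n a.
Proof.
by have [n Nn ->] := atransP2 regular_transitive (in_setT a) (in_setT b); exists n.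
Qed.

Lemma card_regular : #|N| = #|Omega|.
Proof.
have [a _ _] := imsetP regular_transitive.
rewrite -(card_orbit_stab 'P N a) regular_astab1 cards1 muln1.
by rewrite (atransP regular_transitive) ?cardsT.
Qed.

Lemma regular_cent_fix a h : h \in 'C(N) -> h a = a -> h = 1.
Proof.
move=> cNh ha; apply/permP => b; have [n Nn ->] := regular_orbit_surj a b.
by rewrite perm1 -permM -(centP cNh) // permM ha.
Qed.

Lemma regular_abelian_cent : abelian N -> 'C(N) \subset N.
Proof.
move=> abN; apply/subsetP => h cNh; have [a _ _] := imsetP regular_transitive.
have [n Nn hn] := regular_orbit_surj a (h a).
have cNn : n^-1 \in 'C(N) by rewrite groupV (subsetP abN).
have /(regular_cent_fix (a := a)) : h * n^-1 \in 'C(N) by rewrite groupM.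
by rewrite permM hn permK => /(_ erefl)/eqP; rewrite mulg_eq1 invgK => /eqP->.
Qed.

Lemma regular_conj_transitive a (G : {group {perm Omega}}) :
    G \subset 'N(N) -> [transitive 'C_G[a | 'P], on [set: Omega] :\ a | 'P] ->
  {in N :\ 1 &, forall n m, m \in n ^: 'C_G[a | 'P]}.
Proof.
move=> nNG trGa n m /setD1P[n1 Nn] /setD1P[m1 Nm].
have moved k : k \in N -> k != 1 -> k a \in [set: Omega] :\ a.
  move=> Nk k1; rewrite !inE andbT; apply: contraNneq k1 => ka.
  by apply/eqP/(regular_orbit_inj (a := a)); rewrite ?perm1.
have [h /setIP[Gh /astab1P ha] hnm] := atransP2 trGa (moved n Nn n1) (moved m Nm m1).
apply/imsetP; exists h; first by rewrite inE Gh; apply/astab1P.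
apply: (regular_orbit_inj (a := a)); rewrite ?memJ_norm ?(subsetP nNG) //.
by rewrite hnm -{2}ha /= apermE permJ.
Qed.

(* By Dedekind's law, since G = G_a N, the overgroups X of G_a correspond to
   the G_a-invariant subgroups N :&: X of N. *)
Lemma primitive_regular_normal a (G : {group {perm Omega}}) :
    N \subset G -> G \subset 'N(N) ->
  [primitive G, on [set: Omega] | 'P] =
    ~~ [exists W : {group {perm Omega}},
          [&& W \proper N, W :!=: 1 & 'C_G[a | 'P] \subset 'N(W)]].
Proof.
move=> sNG nNG; set C := 'C_G[a | 'P].
have trG : [transitive G, on [set: Omega] | 'P].
  by rewrite (atrans_supgroup sNG regular_transitive); apply/actsP => g _ b; rewrite !inE.
have defG : C * N = G.
  by apply/(subgroup_transitiveP (in_setT a) sNG trG); apply: regular_transitive.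
have CN1 : N :&: C = 1.
  apply/trivgP; rewrite -(regular_astab1 a); apply/subsetP => h /setIP[Nh /setIP[_ cah]].
  exact/setIP.
have sCG : C \subset G := subsetIl G _.
rewrite (trans_prim_astab (in_setT a) trG) -/C negb_exists.
apply/maximal_eqP/forallP => [[_ maxC] W | noW].
  apply/negP => /and3P[/andP[sWN not_sNW] ntW nWC].
  have sWG := subset_trans sWN sNG.
  have [] := maxC (W <*> C)%G (joing_subr _ _); first by rewrite join_subG sWG.
    move=> /= defWC; case/eqP: ntW; apply/trivgP; rewrite -CN1 subsetI sWN.
    by apply: subset_trans (joing_subl W C) _; rewrite defWC.
  rewrite /= norm_joinEr // => defWC; case/negP: not_sNW.
  by have := group_modl C sWN; rewrite defWC (setIidPr sNG) setIC CN1 mulg1 => ->.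
split=> // X sCX sXG; have /negP := noW [group of N :&: X].
have nNX_C : C \subset 'N(N :&: X).
  by rewrite normsI ?(subset_trans sCX (normG X)) ?(subset_trans sCG nNG).
have defX : C * (N :&: X) = X by rewrite group_modl // defG (setIidPr sXG).
rewrite nNX_C andbT /proper subsetIl /= => /negP/nandP[/negbNE sNX | /negbNE/eqP X1].
  by right; apply/eqP; rewrite eqEsubset sXG -defG mul_subG // (subset_trans sNX) ?subsetIr.
by left; rewrite -defX X1 mulg1.
Qed.

End RegularNormalSubgroup.

Lemma dvdn_uniform_orbits (aT : finGroupType) (rT : finType) (to : {action aT &-> rT})
    (G : {group aT}) (S : {set rT}) d :
  [acts G, on S | to] -> {in S, forall x, #|orbit to G x| = d} -> d %| #|S|.
Proof.
move=> nSG dS; rewrite -(acts_sum_card_orbit nSG) (eq_bigr (fun _ => d)).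
  by rewrite sum_nat_const dvdn_mull.
by move=> _ /imsetP[x Sx ->]; apply: dS.
Qed.

Lemma card_mod_cent1 (gT : finGroupType) (X : {group gT}) (y : gT) (p : nat) :
  p.-elt y -> y \in 'N(X) -> #|X| = #|'C_X[y]| %[mod p].
Proof.
move=> py nXy; rewrite -cent_cycle -afixJ.
by apply: pgroup_fix_mod py _; rewrite astabsJ cycle_subG.
Qed.

Lemma conj_prod_stable (gT : finGroupType) (V : finZmodType) (N : {group gT})
    (f : {morphism N >-> V}) (O : {set gT}) l :
  'injm f -> O \subset N -> l \in 'N(O) ->
  (\prod_(m in O) m) ^ l = \prod_(m in O) m.
Proof.
move=> injf sON nOl; have NOl m : m \in O -> m ^ l \in N.
  by move=> Om; rewrite (subsetP sON) // memJ_norm.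
rewrite (big_morph (conjg^~ l) (fun x y => conjMg x y l) (conj1g l)).
apply: (injmP injf); rewrite ?group_prod //; first exact: subsetP sON.
rewrite !morph_prod //; last exact: subsetP sON.
change (\sum_(m in O) f (m ^ l)%g = \sum_(m in O) f m)%R.
by rewrite [RHS](reindex_astabs 'J l) ?astabsJ.
Qed.

Lemma index_cent_cyclic_dvdn (gT : finGroupType) (P L : {group gT}) :
  cyclic L -> P \subset 'N(L) -> #|P : 'C_P(L)| %| totient #|L|.
Proof.
move=> cycL nLP; rewrite -(card_Aut_cyclic cycL).
have <- : #|conj_aut L @* P| = #|P : 'C_P(L)|.
  by rewrite card_morphim ker_conj_aut (setIidPr nLP) indexgI.
by rewrite cardSg ?Aut_conj_aut.
Qed.

Lemma cyclic_isog_Zp (gT : finGroupType) (G : {group gT}) :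
  cyclic G -> 1 < #|G| -> G \isog [set: 'Z_#|G|].
Proof.
case/cyclicP=> x -> x_gt1; rewrite isog_sym.
by have := Zp_isog x; rewrite /Zp -orderE x_gt1.
Qed.

Lemma cent_coprime_join_isog (gT : finGroupType) (L : {group gT}) y :
  cyclic L -> y \in 'C(L) -> coprime #|L| #[y] -> 1 < (#|L| * #[y])%N ->
  L <*> <[y]> \isog [set: 'Z_((#|L| * #[y])%N)].
Proof.
move=> cycL cLy coLy; have defM : L <*> <[y]> = L * <[y]>.
  by rewrite cent_joinEr ?cycle_subG.
have oM : #|L <*> <[y]>| = (#|L| * #[y])%N by rewrite defM TI_cardMg ?coprime_TIg.
rewrite -oM => M_gt1; apply: cyclic_isog_Zp M_gt1.
by rewrite /= defM cyclicM ?cycle_cyclic ?cycle_subG.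
Qed.

Section AffineDegree64.

Variables (Omega : finType) (H K N : {group {perm Omega}}) (a : Omega).
Hypotheses (regN : regular_on N) (nsNH : N <| H)
  (isoN : N \isog [set: 'rV['F_2]_6])
  (trHa : [transitive 'C_H[a | 'P], on [set: Omega] :\ a | 'P])
  (nsKH : K <| H) (ntL : 'C_K[a | 'P] :!=: 1) (impK : imprimitive_on K).

Local Notation A := 'C_H[a | 'P].
Local Notation L := 'C_K[a | 'P].

Lemma abelem_N : 2.-abelem N.
Proof. by rewrite (isog_abelem isoN) mx_Fp_abelem. Qed.

Lemma abelian_N : abelian N.
Proof. exact: abelem_abelian abelem_N. Qed.

Lemma invg_N n : n \in N -> n^-1 = n.
Proof.
have /(abelemP (isT : prime 2))[_ /[apply] /eqP] := abelem_N.
by rewrite expgS expg1 -eq_invg_mul => /eqP.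
Qed.

Lemma card_N : #|N| = 64.
Proof. by rewrite (card_isog isoN) cardsT card_mx card_Fp. Qed.

Lemma card_N1 : #|N :\ 1| = 63.
Proof. by have := cardsD1 1 N; rewrite group1 card_N => -[]. Qed.

Lemma card_Omega1 : #|[set: Omega] :\ a| = 63.
Proof.
have := cardsD1 a [set: Omega].
by rewrite in_setT cardsT -(card_regular regN) card_N => -[].
Qed.

Lemma ntN : N :!=: 1.
Proof. by rewrite -cardG_gt1 card_N. Qed.

Lemma norm_N_H : H \subset 'N(N).
Proof. exact: normal_norm nsNH. Qed.

Lemma sub_L_A : L \subset A.
Proof. by rewrite setSI ?normal_sub. Qed.

Lemma norm_L_A : A \subset 'N(L).
Proof.
rewrite normsI ?(subset_trans (subsetIl _ _) (normal_norm nsKH)) //.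
exact: subset_trans (subsetIr _ _) (normG _).
Qed.

Lemma norm_N_L : L \subset 'N(N).
Proof. exact: subset_trans (subsetIl _ _) (subset_trans (normal_sub nsKH) norm_N_H). Qed.

Lemma class_A_N : {in N :\ 1 &, forall n m, m \in n ^: A}.
Proof. by move=> n m Nn Nm; apply: (regular_conj_transitive regN norm_N_H trHa). Qed.

Lemma class_conj_A n h : h \in A -> (n ^ h) ^: L = (n ^: L) :^ h.
Proof.
move=> Ah; rewrite -class_lcoset -norm_rlcoset ?class_rcoset //.
exact: subsetP norm_L_A h Ah.
Qed.

Lemma card_class_eq : {in N :\ 1 &, forall n m, #|n ^: L| = #|m ^: L|}.
Proof.
move=> n m Nn Nm; have /imsetP[h Ah ->] := class_A_N Nn Nm.
by rewrite class_conj_A ?cardJg.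
Qed.

Lemma class_sub_N n : n \in N -> n ^: L \subset N.
Proof.
move=> Nn; apply/subsetP => _ /imsetP[l Ll ->].
by rewrite memJ_norm // (subsetP norm_N_L).
Qed.

Lemma cent_L_N : 'C_N(L) = 1.
Proof.
apply/trivgP/subsetP => n /setIP[Nn cLn]; apply/set1gP/eqP; apply: contraNT ntL => n1.
have cNL : N \subset 'C(L).
  apply/subsetP => m Nm; have [-> | m1] := eqVneq m 1; first exact: group1.
  have /imsetP[h Ah ->] : m \in n ^: A by apply: class_A_N; rewrite !inE ?n1 ?m1.
  by rewrite -(normP (subsetP norm_L_A h Ah)) centJ memJ_conjg.
rewrite centsC in cNL; apply/eqP/trivgP/subsetP => l Ll; have /setIP[_ /astab1P la] := Ll.
by apply/set1gP/(regular_cent_fix regN (a := a)) => //; apply: subsetP cNL l Ll.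
Qed.

Lemma sub_N_K : N \subset K.
Proof.
have [nKH sKH] := (normal_norm nsKH, normal_sub nsKH).
have [KN1 | /trivgPn[n /setIP[Kn Nn] n1]] := eqVneq (K :&: N) 1.
  have cNK : K \subset 'C(N).
    apply/commG1P/trivgP; rewrite -KN1 commg_subI // !subsetI !subxx /=.
      exact: subset_trans sKH norm_N_H.
    exact: subset_trans (normal_sub nsNH) nKH.
  have sKN := subset_trans cNK (regular_abelian_cent regN abelian_N).
  by case/negP: ntL; rewrite -subG1 subIset // -KN1 subsetI subxx sKN.
apply/subsetP => m Nm; have [-> | m1] := eqVneq m 1; first exact: group1.
have /imsetP[h /setIP[Hh _] ->] : m \in n ^: A by apply: class_A_N; rewrite !inE ?n1 ?m1.
by rewrite memJ_norm // (subsetP nKH).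
Qed.

Lemma class_card_gt1 n : n \in N :\ 1 -> 1 < #|n ^: L|.
Proof.
case/setD1P=> n1 Nn; rewrite -index_cent1 indexg_gt1 subsetI subxx sub_cent1 /=.
by apply: contra n1 => cLn; apply/eqP/set1gP; rewrite -cent_L_N inE Nn.
Qed.

(* Every L-class of N^#, together with 1, is a subgroup of N. *)
Definition class_closed := forall u v,
  u \in N :\ 1 -> v \in u ^: L -> v != u -> u * v \in u ^: L.

Section UniformClassSize.

Variable d : nat.
Hypothesis card_classL : {in N :\ 1, forall n, #|n ^: L| = d}.

Lemma card_mod_class (X : {group {perm Omega}}) :
  X \subset N -> L \subset 'N(X) -> #|X| = 1 %[mod d].
Proof.
move=> sXN nXL; apply/eqP; rewrite (cardsD1 1 X) group1 add1n eqn_mod_dvd // subn1 /=.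
apply: (dvdn_uniform_orbits (to := 'J) (G := L)); first by rewrite astabsJ normsD1.
by move=> n Xn; apply: card_classL; apply: subsetP Xn; rewrite setSD.
Qed.

Lemma uniform_class_card_gt1 : 1 < d.
Proof.
have [n Nn n1] := trivgPn _ ntN.
by rewrite -(card_classL (x := n)) ?class_card_gt1 // !inE n1.
Qed.

Lemma uniform_class_card_cases :
  d = 3 \/ d = 7 /\ exists W : {group {perm Omega}},
                       [/\ W \subset N, L \subset 'N(W) & #|W| = 8].
Proof.
have nNK := subset_trans (normal_sub nsKH) norm_N_H.
have : ~~ [primitive K, on [set: Omega] | 'P].
  by case/andP: impK => _ exQ; rewrite /primitive exQ andbF.
rewrite (primitive_regular_normal regN a sub_N_K nNK) negbK.
case/existsP=> W /and3P[ltWN ntW nWL].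
have sWN := proper_sub ltWN.
have W64 : #|W| %| 64 by rewrite -card_N cardSg.
have d63 : 64 = 1 %[mod d] by rewrite -card_N card_mod_class ?norm_N_L.
have := divisor64_mod_cases uniform_class_card_gt1 d63 W64.
rewrite cardG_gt1 ntW -card_N proper_card // card_mod_class //.
by case/(_ isT erefl) => [|[d7 W8]]; [left | right; split=> //; exists W].
Qed.

Lemma class_closed_of_subgroup (W : {group {perm Omega}}) :
  W \subset N -> L \subset 'N(W) -> #|W| = d.+1 -> class_closed.
Proof.
move=> sWN nWL oW u v Nu vu v_u.
have [oW1] : #|W :\ 1|.+1 = d.+1 by rewrite -oW (cardsD1 1 W) group1.
have [w /setD1P[w1 Ww]] : exists w, w \in W :\ 1.
  by apply/set0Pn; rewrite -card_gt0 oW1 ltnW ?uniform_class_card_gt1.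
have Nw := subsetP sWN w Ww.
have defW : W :\ 1 = w ^: L.
  apply/esym/eqP; rewrite eqEcard card_classL ?inE ?w1 // oW1 leqnn andbT.
  apply/subsetP => _ /imsetP[l Ll ->]; rewrite !inE conjg_eq1 w1 memJ_norm //.
  exact: subsetP nWL l Ll.
move: vu v_u; have /imsetP[h Ah ->] : u \in w ^: A.
  by apply: class_A_N; rewrite // !inE w1.
rewrite class_conj_A // -defW !mem_conjg conjMg conjgK !inE.
case/andP=> v1 Wv v_w; rewrite groupM // andbT -eq_invg_mul (invg_N Nw).
by apply: contraNneq v_w => ->; rewrite conjgKV.
Qed.

(* The product of a class is L-invariant, hence trivial by cent_L_N, so each
   element of a class of size 3 is the product of the other two. *)
Lemma class_closed_of_card3 : d = 3 -> class_closed.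
Proof.
move=> d3 u v Nu vu v_u; set O := u ^: L; have /setD1P[_ Nu'] := Nu.
have sON : O \subset N := class_sub_N Nu'.
have Nv := subsetP sON v vu.
have [f injf _] := isogP isoN.
have fN m : m \in N -> (- f m)%R = f m.
  by move=> Nm; rewrite -[(- _)%R]/(f m)^-1 -morphV ?invg_N.
have sumO : (\sum_(m in O) f m = 0)%R.
  have <- : f (\prod_(m in O) m) = (\sum_(m in O) f m)%R.
    by rewrite morph_prod // => m /(subsetP sON).
  suff -> : \prod_(m in O) m = 1 by rewrite morph1.
  apply/set1gP; rewrite -cent_L_N inE group_prod => [|m /(subsetP sON)//].
  apply/centP => l Ll; apply/commgP/conjg_fixP.
  exact: conj_prod_stable injf sON (subsetP (class_norm u L) l Ll).
have [z defz] : exists z, O :\ u :\ v = [set z].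
  have oO : #|O| = 3 by rewrite -d3 card_classL.
  apply/cards1P; have := cardsD1 u O; rewrite class_refl (cardsD1 v (O :\ u)).
  by rewrite !inE v_u vu oO !add1n => -[->].
have Oz : z \in O by have := set11 z; rewrite -defz => /setD1P[_ /setD1P[]].
move: sumO; rewrite (big_setD1 u) ?class_refl //= (big_setD1 v) ?inE ?v_u //=.
rewrite defz big_set1 => sumO.
suff -> : u * v = z by [].
have Nz := subsetP sON z Oz.
apply: (injmP injf); rewrite ?groupM // morphM //.
change (f u + f v = f z)%R; rewrite -(fN z Nz).
by apply/eqP; rewrite -addr_eq0 -addrA sumO.
Qed.

(* If v^l != v then, with w = u v, the element v v^l = w w^l lies in both
   v^L and w^L, so w \in v^L and u = v w \in v^L. *)
Lemma class_closed_fix l u v : class_closed -> l \in L ->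
  u \in N :\ 1 -> u ^ l = u -> v \in N :\ 1 -> v \notin u ^: L -> v ^ l = v.
Proof.
move=> cl Ll Nu ul Nv vO; have /setD1P[u1 Nu'] := Nu; have /setD1P[v1 Nv'] := Nv.
apply/eqP; apply: contraR vO => vl; set w := u * v.
have cuv : commute u v := centsP abelian_N u Nu' v Nv'.
have uu : u * u = 1 by rewrite -{1}(invg_N Nu') mulVg.
have vv : v * v = 1 by rewrite -{1}(invg_N Nv') mulVg.
have wl : w ^ l = u * v ^ l by rewrite conjMg ul.
have Nw : w \in N :\ 1.
  rewrite !inE groupM // andbT; apply: contra vl => /eqP uv1.
  by rewrite -(mulKg u v) -/w uv1 mulg1 invg_N // ul.
have vvl : v * v ^ l \in v ^: L by apply: cl; rewrite ?memJ_class.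
have wwl : w * w ^ l \in w ^: L.
  by apply: cl; rewrite ?memJ_class // wl; apply: contra vl => /eqP/mulgI ->.
have wv : w \in v ^: L.
  apply: class_trans vvl; rewrite class_sym.
  by move: wwl; rewrite wl /w -mulgA (mulgA v) -cuv !mulgA uu mul1g.
have w_v : w != v by apply: contra u1 => /eqP uvv; apply/eqP/(mulIg v); rewrite mul1g.
by have := cl v w Nv wv w_v; rewrite /w cuv mulgA vv mul1g class_sym.
Qed.

Lemma class_closed_cent1 n :
  class_closed -> d < 63 -> n \in N :\ 1 -> 'C_L[n] = 1.
Proof.
move=> cl d63 Nn; apply/trivgP/subsetP => l /setIP[Ll /cent1P cln].
have nl : n ^ l = n by apply/conjg_fixP/commgP; apply: commute_sym.
have [v Nv vO] : exists2 v, v \in N :\ 1 & v \notin n ^: L.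
  apply/subsetPn; apply: contraTN d63 => /subset_leq_card.
  by rewrite card_classL // card_N1 -leqNgt.
have vl := class_closed_fix cl Ll Nn nl Nv vO.
have /setIP[_ /astab1P la] := Ll; apply/set1gP/(regular_cent_fix regN (a := a)) => //.
apply/centP => m Nm; apply: commute_sym; apply/commgP/conjg_fixP.
have [-> | m1] := eqVneq m 1; first exact: conj1g.
have Nm1 : m \in N :\ 1 by rewrite !inE m1.
have [mO | mO] := boolP (m \in n ^: L); last exact: class_closed_fix cl Ll Nn nl Nm1 mO.
apply: class_closed_fix cl Ll Nv vl Nm1 _.
by apply: contra vO => mv; rewrite (class_trans _ mO) // class_sym.
Qed.

Lemma card_L_class_closed : class_closed -> d < 63 -> #|L| = d.
Proof.
move=> cl d63; have [n Nn n1] := trivgPn _ ntN; have Nn1 : n \in N :\ 1 by rewrite !inE n1.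
by rewrite -(card_classL Nn1) -index_cent1 class_closed_cent1 ?indexg1.
Qed.

End UniformClassSize.

Lemma card_L_classes : (#|L| = 3 \/ #|L| = 7) /\ {in N :\ 1, forall n, #|n ^: L| = #|L|}.
Proof.
have [n Nn n1] := trivgPn _ ntN; have Nn1 : n \in N :\ 1 by rewrite !inE n1.
have classL : {in N :\ 1, forall m, #|m ^: L| = #|n ^: L|}.
  by move=> m Nm; apply: card_class_eq.
have [d3 | [d7 [W [sWN nWL oW]]]] := uniform_class_card_cases classL.
  have cl := class_closed_of_card3 classL d3.
  rewrite (card_L_class_closed classL cl) ?d3 //.
  by split; [left | rewrite -d3].
have oW' : #|W| = #|n ^: L|.+1 by rewrite oW d7.
have cl := class_closed_of_subgroup classL sWN nWL oW'.
rewrite (card_L_class_closed classL cl) ?d7 //.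
by split; [right | rewrite -d7].
Qed.

(* e ^ logn e 63 is the e-part of #|[set: Omega] :\ a|, which divides #|A|. *)
Lemma cofactor21 : exists e, [/\ prime e, coprime #|L| e, (#|L| * e = 21)%N
                                 & ~~ (e ^ logn e 63 %| totient #|L|)].
Proof. by have [[oL | oL] _] := card_L_classes; rewrite oL; [exists 7 | exists 3]. Qed.

Lemma trivg_mod21 e (X : {group {perm Omega}}) :
    (#|L| * e = 21)%N -> coprime #|L| e -> X \proper N -> L \subset 'N(X) ->
  #|X| = 1 %[mod e] -> X :=: 1.
Proof.
move=> oLe coLe ltXN nXL /eqP Xe; have [_ classL] := card_L_classes.
have /eqP XL := card_mod_class classL (proper_sub ltXN) nXL.
apply/eqP; rewrite trivg_card1; apply/eqP/divisor64_mod21.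
- by rewrite -card_N cardSg ?proper_sub.
- by rewrite -card_N proper_card.
- by apply/eqP; rewrite -oLe chinese_remainder // XL Xe.
Qed.

Lemma exists_Z21_join : exists2 y, y \in A & L <*> <[y]> \isog [set: 'Z_21].
Proof.
have [e [e_pr coLe oLe not_dvd]] := cofactor21.
have cycL : cyclic L by have [[] oL _] := card_L_classes; rewrite prime_cyclic ?oL.
have [S sylS] := Sylow_exists e A; have sSA := pHall_sub sylS.
have ntC : 'C_S(L) != 1.
  apply: contra not_dvd => /eqP CSL1.
  have := index_cent_cyclic_dvdn cycL (subset_trans sSA norm_L_A).
  rewrite CSL1 indexg1 (card_Hall sylS) p_part; apply: dvdn_trans.
  by rewrite -!p_part partn_dvd // -card_Omega1 (atrans_dvd trHa).
have [_ eC _] := pgroup_pdiv (pgroupS (subsetIl S _) (pHall_pgroup sylS)) ntC.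
have [y /setIP[Sy cLy] oy] := Cauchy e_pr eC.
exists y; first exact: subsetP sSA y Sy.
by have := cent_coprime_join_isog cycL cLy; rewrite oy oLe; apply.
Qed.

Lemma primitive_Z21_join x : x \in A -> L <*> <[x]> \isog [set: 'Z_21] ->
  [primitive K <*> <[x]>, on [set: Omega] | 'P].
Proof.
move=> Ax isoM.
have [e [e_pr coLe oLe _]] := cofactor21.
have eM : e %| #|L <*> <[x]>|.
  by rewrite (card_isog isoM) cardsT card_ord -[(Zp_trunc 21).+2]/21 -oLe dvdn_mull.
have [y My oy] := Cauchy e_pr eM.
have sMA : L <*> <[x]> \subset A by rewrite join_subG sub_L_A cycle_subG.
have cLy : y \in 'C(L).
  have abM : abelian (L <*> <[x]>) by rewrite (isog_abelian isoM) FinRing.zmod_abelian.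
  by apply: subsetP (centS (joing_subl L <[x]>)) y (subsetP abM y My).
have ey : e.-elt y by rewrite /p_elt oy pnat_id.
have CNy : 'C_N[y] = 1.
  have /setIP[Hy /astab1P ya] := subsetP sMA y My.
  apply: (trivg_mod21 oLe coLe).
  - rewrite properEneq subsetIl andbT; apply: contraTneq (prime_gt1 e_pr) => CN.
    rewrite -oy; suff -> : y = 1 by rewrite order1.
    apply: (regular_cent_fix regN (a := a)) ya; apply/centP => n Nn.
    by have /setIP[_ /cent1P/commute_sym] : n \in 'C_N[y] by rewrite CN.
  - by rewrite normsI ?norm_N_L // (subset_trans _ (normG 'C[y])) // sub_cent1.
  - rewrite -(card_mod_cent1 ey (subsetP norm_N_H y Hy)) card_N; apply/eqP.
    by rewrite eqn_mod_dvd // (dvdn_trans _ (isT : 21 %| 63)) // -oLe dvdn_mull.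
have sNG : N \subset K <*> <[x]> := subset_trans sub_N_K (joing_subl _ _).
have nNG : K <*> <[x]> \subset 'N(N).
  rewrite join_subG (subset_trans (normal_sub nsKH) norm_N_H) cycle_subG /=.
  exact: subsetP (subset_trans (subsetIl _ _) norm_N_H) x Ax.
rewrite (primitive_regular_normal regN a sNG nNG).
apply/existsP => -[W /and3P[ltWN ntW nWC]]; case/eqP: ntW.
have sMC : L <*> <[x]> \subset 'C_(K <*> <[x]>)[a | 'P].
  rewrite subsetI (subset_trans sMA (subsetIr _ _)) andbT join_subG joing_subr andbT.
  exact: subset_trans (subsetIl _ _) (joing_subl _ _).
have nWM := subset_trans sMC nWC.
apply: (trivg_mod21 oLe coLe ltWN); first exact: subset_trans (joing_subl _ _) nWM.
rewrite (card_mod_cent1 ey) ?(subsetP nWM) //.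
suff -> : 'C_W[y] = 1 by rewrite cards1.
by apply/trivgP; rewrite -CNy setSI ?proper_sub.
Qed.

End AffineDegree64.

Theorem lemma3p3 (Omega : finType) (H K : {group {perm Omega}}) :
  affine_2_6 H ->
  [transitive^2 H, on [set: Omega] | 'P] ->
  K :!=: 1 -> K <| H ->
  (forall a : Omega, 'C_K[a | 'P] :!=: 1) ->
  imprimitive_on K ->
  forall a : Omega,
    (exists s : nat, (s = 3 \/ s = 7)%N /\ 'C_K[a | 'P] \isog [set: 'Z_s]) /\
    (exists2 x, x \in 'C_H[a | 'P] &
        ('C_K[a | 'P] <*> <[x]>) \isog [set: 'Z_21]) /\
    (forall x, x \in 'C_H[a | 'P] ->
        ('C_K[a | 'P] <*> <[x]>) \isog [set: 'Z_21] ->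
        [primitive K <*> <[x]>, on [set: Omega] | 'P]).
Proof.
(* #|Omega| = 2^6 and K :!=: 1 follow from the other hypotheses. *)
move=> [_ [N [nsNH regN isoN]]] trH _ nsKH ntL impK a.
have trHa : [transitive 'C_H[a | 'P], on [set: Omega] :\ a | 'P].
  apply: (ntransitive1 (m := 1)) => //; exact: (stab_ntransitive (m := 1)) (in_setT a) trH.
have [oL _] := card_L_classes regN nsNH isoN trHa nsKH (ntL a) impK.
split; last split.
- exists #|'C_K[a | 'P]|; split=> //; apply: cyclic_isog_Zp; last by rewrite cardG_gt1 ntL.
  by rewrite prime_cyclic //; case: oL => ->.
- exact: exists_Z21_join regN nsNH isoN trHa nsKH (ntL a) impK.
- move=> x Ax isoM.
  exact: (primitive_Z21_join regN nsNH isoN trHa nsKH (ntL a) impK Ax isoM).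
Qed.
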